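(* Let $\rho = (\mathcal{V}, V, \mathbf{1}, \mathrm{var}, \mathrm{low}, \mathrm{high}, \mathrm{flip})$ be a COBDD with $\mathcal{V} = \mathcal{X} \,\dot\cup\, \mathcal{U}$, where $\mathcal X=\{x_1,\dots,x_n\}$ and $\mathcal U=\{u_1,\dots,u_r\}$, let $v \in V$ be a node, $b \in \mathbb{B}$ a boolean, and let $[\![ v, b]\!] = K(\mathbf{x}, \mathbf{u})$. Then the C function K output by Synthesize$(\rho, v, b)$ has worst case execution time $O(rn)$.
   Context: $\mathbb{B}=\{0,1\}$; $\exists y\, f := f|_{y=0}+f|_{y=1}$. A COBDD is a tuple $\rho = (\mathcal{V}, V, \mathbf{1}, \mathrm{var}, \mathrm{low}, \mathrm{high}, \mathrm{flip})$ with $\mathcal V$ a finite totally ordered set of boolean variables, $V$ a finite set of nodes, $\mathbf 1\in V$ the terminal node, $\mathrm{var}: V\setminus\{\mathbf 1\}\to\mathcal V$, $\mathrm{high},\mathrm{low}: V\setminus\{\mathbf 1\}\to V$, $\mathrm{flip}: V\setminus\{\mathbf 1\}\to\mathbb B$, with variables strictly increasing along edges $v\to\mathrm{high}(v)$, $v\to\mathrm{low}(v)$; COBDDs are assumed reduced. $\mathrm{height}(v)$ is the length of the longest path from $v$ to $\mathbf 1$. Semantics: $[\![ \mathbf 1, b]\!] := \bar b$ and, for internal $v$ with $\mathrm{var}(v)=y$, $[\![ v,b]\!] := y [\![ \mathrm{high}(v), b]\!] + \bar y [\![ \mathrm{low}(v), b\oplus \mathrm{flip}(v)]\!]$. Synthesize$(\rho,v,b)$: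 (1) for $i=1,\dots,r$ compute (via correct COBDD substitution/quantification operations) a node $v_i$ and bit $b_i$ with $[\![ v_i,b_i]\!] = \exists u_{i+1},\dots,u_r\, K(\mathbf x, [\![ v_1,b_1]\!],\dots,[\![ v_{i-1},b_{i-1}]\!], 1, u_{i+1},\dots,u_r)$; (2) emit C code ''int K_bits(int *x, int action) { int ret_b; switch(action) { case $i-1$: ret_b = $\bar b_i$; goto L_$v_i$; ... }'' followed by one labeled block per node $w$ reachable from some $v_i$ (each node translated once): ''L_$\mathbf 1$: return ret_b;'' for the terminal, and for internal $w$ with $\mathrm{var}(w)=x_j$, ''L_$w$: if (x[$j-1$] == 1) goto L_$\mathrm{high}(w)$; else {ret_b = !ret_b; goto L_$\mathrm{low}(w)$;}'' if $\mathrm{flip}(w)=1$, or ''... else goto L_$\mathrm{low}(w)$;'' if $\mathrm{flip}(w)=0$; then ''}'' and ''void K(int *x,int *u){int i; for(i=0;i<$r$;i++) u[i]=K_bits(x,i);}''. Execution time is counted in executed C statements. *)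

From HB Require Import structures.
From mathcomp Require Import all_boot all_order all_algebra.
Set Implicit Arguments. Unset Strict Implicit. Unset Printing Implicit Defensive.

(* Variables: V = X (+) U, X = {x_1..x_n} = inl 'I_n (x_{j+1} = inl j), *)
(* U = {u_1..u_r} = inr 'I_r (u_{k+1} = inr k).                         *)
(* The total order on V is an arbitrary one, given by an injective rank. *)
Definition cvar (n r : nat) := ('I_n + 'I_r)%type.

(* A (reduced) COBDD.  var/low/high/flip are only meaningful on nodes   *)
(* different from the terminal [one]; their value at [one] is ignored.  *)
Record cobdd (n r : nat) := COBDD {
  node : finType;
  one : node;
  var : node -> cvar n r;
  low : node -> node;
  high : node -> node;
  flip : node -> bool;
  vrank : cvar n r -> nat;
  vrank_inj : injective vrank;
  ordered_high : forall w, w != one -> high w != one ->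
    vrank (var w) < vrank (var (high w));
  ordered_low : forall w, w != one -> low w != one ->
    vrank (var w) < vrank (var (low w));
  reduced_redundant : forall w, w != one -> ~ (high w = low w /\ flip w = false);
  reduced_unique : forall w w', w != one -> w' != one ->
    var w = var w' -> high w = high w' -> low w = low w' -> flip w = flip w' ->
    w = w'
}.

Section Sem.
Variables (n r : nat) (rho : cobdd n r).

(* [[w, b]] evaluated at an assignment a : V -> B.  Fuel-based; since  *)
(* paths have length <= n + r (ordering), fuel (n + r).+1 is enough.    *)
Fixpoint eval_fuel (fuel : nat) (w : node rho) (b : bool)
    (a : cvar n r -> bool) : bool :=
  match fuel with
  | 0 => false
  | k.+1 =>
    if w == one rho then ~~ b
    else if a (var w) then eval_fuel k (high w) b a
    else eval_fuel k (low w) (b (+) flip w) a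
  end.

Definition sem (w : node rho) (b : bool) (a : cvar n r -> bool) : bool :=
  eval_fuel (n + r).+1 w b a.

(* Step (1) of Synthesize (0-indexed: i : 'I_r stands for u_{i+1}):   *)
(* [[v_i,b_i]] = exists u_{i+1..r}.                                    *)
(*     K(x, [[v_1,b_1]],..,[[v_{i-1},b_{i-1}]], 1, u_{i+1},..,u_r)      *)
(* with K(x,u) = [[v,b]].                                              *)
Definition synth_spec (v : node rho) (b : bool)
    (vs : 'I_r -> node rho) (bs : 'I_r -> bool) : Prop :=
  forall (i : 'I_r) (a : cvar n r -> bool),
    sem (vs i) (bs i) a =
    [exists w : {ffun 'I_r -> bool},
       sem v b (fun y => match y with
                         | inl j => a (inl j)
                         | inr k => if k < i then sem (vs k) (bs k) a
                                    else if k == i then true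
                                    else w k
                         end)].

(* A labelled block "L_w: ..." of K_bits. *)
Inductive block :=
| BReturn                                   (* L_1: return ret_b;                      *)
| BIf (j : nat) (hi : node rho) (fl : bool) (lo : node rho)
    (* L_w: if (x[j] == 1) goto L_hi;
            else {ret_b = !ret_b; goto L_lo;}   (if fl)
            else goto L_lo;                     (if ~~ fl)                               *)
| BGoto (w : node rho).                     (* L_w: goto L_w'; (never emitted for a
                                               correct run; see translate)            *)

Record kbits_prog := KBits {
  kb_case : nat -> option (bool * node rho);   (* case a: ret_b = c; goto L_w; *)
  kb_block : node rho -> option block          (* the block labelled L_w, if emitted *)
}.

Definition edge : rel (node rho) :=
  fun w w' => (w != one rho) && ((w' == high w) || (w' == low w)).

(* Translation of one node.  The paper only translates nodes labelled   *)
(* by x-variables; a u-labelled node (which cannot be reachable) is     *)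
(* conservatively translated to an infinite loop "L_w: goto L_w;".     *)
Definition translate (w : node rho) : block :=
  if w == one rho then BReturn
  else match var w with
       | inl j => BIf j (high w) (flip w) (low w)
       | inr _ => BGoto w
       end.

(* Step (2) of Synthesize: the emitted K_bits. *)
Definition synth_prog (vs : 'I_r -> node rho) (bs : 'I_r -> bool) : kbits_prog :=
  KBits (fun a => match @insub nat (fun k => k < r) 'I_r a with
                  | Some i => Some (~~ bs i, vs i)
                  | None => None
                  end)
        (fun w => if [exists i : 'I_r, connect edge (vs i) w]
                  then Some (translate w) else None).

(* Execution with a count of executed C statements.                    *)
(* Result: Some (return value, #statements), None = did not finish     *)
(* within the fuel / undefined behaviour (missing label, no case).      *)
Fixpoint run_blocks (p : kbits_prog) (x : nat -> int) (fuel : nat)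
    (w : node rho) (ret : bool) : option (bool * nat) :=
  match fuel with
  | 0 => None
  | f.+1 =>
    match kb_block p w with
    | None => None
    | Some BReturn => Some (ret, 1)                               (* return *)
    | Some (BIf j hi fl lo) =>
      if x j == Posz 1 then
        omap (fun rt => (rt.1, rt.2 + 2)) (run_blocks p x f hi ret) (* if; goto *)
      else if fl then
        omap (fun rt => (rt.1, rt.2 + 3)) (run_blocks p x f lo (~~ ret))
                                                        (* if; ret_b = !ret_b; goto *)
      else
        omap (fun rt => (rt.1, rt.2 + 2)) (run_blocks p x f lo ret) (* if; goto *)
    | Some (BGoto w') => omap (fun rt => (rt.1, rt.2 + 1)) (run_blocks p x f w' ret)
    end
  end.

(* int K_bits(int *x, int action) { int ret_b; switch(action) {...} ... } *)
(* statements: declaration, switch, case assignment, goto, then blocks. *)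
Definition run_kbits (p : kbits_prog) (x : nat -> int) (fuel : nat)
    (action : nat) : option (bool * nat) :=
  match kb_case p action with
  | None => None
  | Some (c, w) => omap (fun rt => (rt.1, rt.2 + 4)) (run_blocks p x fuel w c)
  end.

(* void K(int *x,int *u){int i; for(i=0;i<r;i++) u[i]=K_bits(x,i);}     *)
(* statements: declaration, init, and per iteration: test, assignment   *)
(* (incl. the call, plus the statements of K_bits), increment; final test. *)
Definition run_K_time (p : kbits_prog) (x : nat -> int) (fuel : nat) : option nat :=
  foldr (fun i acc => match run_kbits p x fuel i, acc with
                      | Some rt, Some t => Some (t + 3 + rt.2)
                      | _, _ => None
                      end)
        (Some 3) (iota 0 r).

End Sem.

(** The per-node cost of the emitted code is constant, so the theorem is about
    path lengths.  A path started at [v_i] reads every variable at most once,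
    so it suffices to show that it meets only x-labelled nodes.  Step (1)
    makes each [[v_i, b_i]] a function of x alone.  In a reduced ordered BDD
    with complement edges semantically equal nodes coincide, and therefore
    every node depends on the variable labelling it and, in turn, on every
    variable labelling a node reachable from it.  Hence no u-labelled node is
    reachable, every call of [K_bits] runs [O(n)] statements and [K] runs
    [O(rn)]. *)
From Pilot Require Import Defs.
From mathcomp Require Import all_boot all_order all_algebra.
From mathcomp Require Import zify.
Set Implicit Arguments. Unset Strict Implicit. Unset Printing Implicit Defensive.

Lemma card_geq_ltn (T : finType) (g : T -> nat) (t : T) (m : nat) :
  g t < m -> #|[pred u | m <= g u]| < #|[pred u | g t <= g u]|.
Proof.
move=> lt_tm; apply/proper_card/properP; split.
  by apply/subsetP => u; rewrite !inE; apply: leq_trans (ltnW lt_tm).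
by exists t; rewrite !inE ?leqnn // -ltnNge.
Qed.

Section Semantics.
Variables (n r : nat) (rho : cobdd n r).
Local Notation N := (node rho).
Local Notation one := (Defs.one rho).
Local Notation rk := (vrank rho).
Local Notation edge := (@edge _ _ rho).
Local Notation assignment := (cvar n r -> bool).

Lemma edge_root w c : edge w c -> w != one.
Proof. by case/andP. Qed.

Lemma edge_high w : w != one -> edge w (high w).
Proof. by rewrite /edge eqxx => ->. Qed.

Lemma edge_low w : w != one -> edge w (low w).
Proof. by rewrite /edge eqxx orbT => ->. Qed.

Lemma edge_rank w c : edge w c -> c != one -> rk (var w) < rk (var c).
Proof.
by case/andP=> w1 /orP[]/eqP-> c1; [apply: ordered_high | apply: ordered_low].
Qed.

Lemma connect_rank w c : connect edge w c -> c != one ->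
  w != one /\ rk (var w) <= rk (var c).
Proof.
case/connectP=> p; elim: p w => [|c' p IHp] w /=; first by move=> _ -> ->.
case/andP=> wc' c'p c_eq c1; have [c'1 le_c'c] := IHp c' c'p c_eq c1.
by split; [apply: edge_root wc' | apply: ltnW (leq_trans (edge_rank wc' c'1) _)].
Qed.

(* Bounds the number of [f]-labelled nodes on a path from [w]. *)
Definition rank_count (T : finType) (f : T -> cvar n r) (w : N) : nat :=
  if w == one then 0 else #|[pred t | rk (var w) <= rk (f t)]|.

Lemma rank_count_edge (T : finType) (f : T -> cvar n r) w c t :
  edge w c -> var w = f t -> rank_count f c < rank_count f w.
Proof.
move=> wc var_w; rewrite /rank_count (negbTE (edge_root wc)).
have [_|c1] := eqVneq c one; first by apply/card_gt0P; exists t; rewrite inE var_w.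
have := edge_rank wc c1; rewrite var_w.
exact: (card_geq_ltn (g := fun t => rk (f t))).
Qed.

Lemma rank_count_max (T : finType) (f : T -> cvar n r) w : rank_count f w <= #|T|.
Proof. by rewrite /rank_count; case: ifP => // _; apply: max_card. Qed.

Definition depth : N -> nat := rank_count id.

Lemma depth_edge w c : edge w c -> depth c < depth w.
Proof. by move=> wc; apply: (@rank_count_edge _ id _ _ (var w) wc). Qed.

Lemma depth_max w : depth w <= n + r.
Proof. by rewrite -(card_ord n) -(card_ord r) -card_sum rank_count_max. Qed.

Lemma edge_ind (P : N -> Prop) :
  (forall w, (forall c, edge w c -> P c) -> P w) -> forall w, P w.
Proof.
move=> IH w; have [k] := ubnP (depth w); elim: k w => // k IHk w lt_wk.
by apply: IH => c wc; apply: IHk; apply: leq_trans (depth_edge wc) _.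
Qed.

Lemma eval_fuel_stable k k' w b a : depth w < k -> depth w < k' ->
  eval_fuel k w b a = eval_fuel k' w b a.
Proof.
elim: k k' w b => // k IHk [|k'] // w b lt_wk lt_wk' /=.
case: ifPn => // w1.
have := depth_edge (edge_high w1); have := depth_edge (edge_low w1).
by case: (a (var w)) => ? ?; apply: IHk; lia.
Qed.

Lemma semE w b a : sem w b a =
  if w == one then ~~ b
  else if a (var w) then sem (high w) b a
  else sem (low w) (b (+) flip w) a.
Proof.
rewrite /sem [LHS]/=; case: ifPn => // w1; have := depth_max w.
have := depth_edge (edge_high w1); have := depth_edge (edge_low w1).
by case: (a (var w)) => ? ? ?; apply: eval_fuel_stable; lia.
Qed.

Lemma sem_local w b (a a' : assignment) :
  (forall y, w != one -> rk (var w) <= rk y -> a y = a' y) -> sem w b a = sem w b a'.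
Proof.
elim/edge_ind: w b => w IH b eq_aa'; rewrite !(semE w); case: ifPn => // w1.
have eq_child c : edge w c -> forall y, c != one -> rk (var c) <= rk y -> a y = a' y.
  by move=> wc y c1 le_cy; apply: eq_aa' w1 (ltnW (leq_trans (edge_rank wc c1) le_cy)).
rewrite eq_aa' //; case: (a' (var w));
  [have wc := edge_high w1 | have wc := edge_low w1]; exact: IH wc _ (eq_child _ wc).
Qed.

Lemma sem_ext (w : N) b (a a' : assignment) : a =1 a' -> sem w b a = sem w b a'.
Proof. by move=> eq_aa'; apply: sem_local => y _ _. Qed.

Definition indep_of (f : assignment -> bool) (y : cvar n r) :=
  forall a v, f [eta a with y |-> v] = f a.

Lemma sem_indep_lower (w : N) b y :
  (w != one -> rk y < rk (var w)) -> indep_of (sem w b) y.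
Proof.
move=> lt_yw a v; apply: sem_local => z w1 le_wz /=.
by case: eqP => // z_y; move: (lt_yw w1); rewrite -z_y; lia.
Qed.

Lemma sem_upd_high w b a : w != one ->
  sem w b [eta a with var w |-> true] = sem (high w) b a.
Proof.
move=> w1; rewrite semE (negbTE w1) /= eqxx.
by apply: sem_indep_lower => /(edge_rank (edge_high w1)).
Qed.

Lemma sem_upd_low w b a : w != one ->
  sem w b [eta a with var w |-> false] = sem (low w) (b (+) flip w) a.
Proof.
move=> w1; rewrite semE (negbTE w1) /= eqxx.
by apply: sem_indep_lower => /(edge_rank (edge_low w1)).
Qed.

Definition canonical_below (k : nat) := forall (w w' : N) b b',
  maxn (depth w) (depth w') < k -> sem w b =1 sem w' b' -> w = w' /\ b = b'.

Lemma canonical_belowW k m : canonical_below k -> m <= k -> canonical_below m.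
Proof. by move=> canon le_mk w w' b b' lt_m; apply: canon; apply: leq_trans le_mk. Qed.

(* Reducedness: a node whose function ignored its own variable would have
   equivalent, hence equal, children and no complement flag. *)
Lemma root_essential w b : w != one -> canonical_below (depth w) ->
  ~ indep_of (sem w b) (var w).
Proof.
move=> w1 canon indep.
have eq_children : sem (high w) b =1 sem (low w) (b (+) flip w).
  by move=> a; rewrite -sem_upd_high // -sem_upd_low // !indep.
have lt_children : maxn (depth (high w)) (depth (low w)) < depth w.
  by rewrite gtn_max !depth_edge ?edge_high ?edge_low.
have [eq_hl] := canon _ _ _ _ lt_children eq_children.
by rewrite -[X in X = _]addbF => /addbI flip0; apply: (reduced_redundant w1).
Qed.

Lemma sem_eq_root_le w w' b b' : w != one -> canonical_below (depth w) ->
  sem w b =1 sem w' b' -> w' != one /\ rk (var w') <= rk (var w).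
Proof.
move=> w1 canon eq_ww'.
case/boolP: ((w' != one) && (rk (var w') <= rk (var w))) => [/andP//|not_le].
exfalso; apply: (root_essential (b := b) w1 canon) => a v; rewrite !eq_ww'.
by apply: sem_indep_lower => w'1; move: not_le; rewrite w'1 -ltnNge.
Qed.

Theorem sem_inj (w w' : N) b b' : sem w b =1 sem w' b' -> w = w' /\ b = b'.
Proof.
suff canon k : canonical_below k by apply: (canon (maxn (depth w) (depth w')).+1).
elim: k => // k IHk {}w {}w' {}b {}b'; rewrite ltnS geq_max => /andP[le_wk le_w'k].
move=> eq_ww'; have eq_w'w : sem w' b' =1 sem w b by move=> a; rewrite eq_ww'.
have canon_w := canonical_belowW IHk le_wk.
have canon_w' := canonical_belowW IHk le_w'k.
have [w_one|w1] := eqVneq w one; first subst w.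
  have [w'_one|w'1] := eqVneq w' one; last first.
    by case: (sem_eq_root_le w'1 canon_w' eq_w'w); rewrite eqxx.
  subst w'; split=> //; apply/negb_inj.
  by move: (eq_ww' predT); rewrite !(semE one) eqxx.
have [w'1 le_w'w] := sem_eq_root_le w1 canon_w eq_ww'.
have [_ le_ww'] := sem_eq_root_le w'1 canon_w' eq_w'w.
have var_ww' : var w = var w'.
  by apply/(@vrank_inj _ _ rho)/eqP; rewrite eqn_leq le_ww' le_w'w.
have lt_k c c' : edge w c -> edge w' c' -> maxn (depth c) (depth c') < k.
  move=> wc w'c'; rewrite gtn_max.
  by rewrite (leq_trans (depth_edge wc) le_wk) (leq_trans (depth_edge w'c') le_w'k).
have [high_ww' b_b'] : high w = high w' /\ b = b'.
  apply: IHk (lt_k _ _ (edge_high w1) (edge_high w'1)) _ => a.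
  by rewrite -!sem_upd_high // var_ww' eq_ww'.
have [low_ww' flip_ww'] : low w = low w' /\ b (+) flip w = b' (+) flip w'.
  apply: IHk (lt_k _ _ (edge_low w1) (edge_low w'1)) _ => a.
  by rewrite -!sem_upd_low // var_ww' eq_ww'.
split=> //; apply: (reduced_unique w1 w'1 var_ww' high_ww' low_ww').
by move: flip_ww'; rewrite b_b' => /addbI.
Qed.

Lemma edge_sem w c b : edge w c ->
  exists v b', sem c b' =1 (fun a => sem w b [eta a with var w |-> v]).
Proof.
move=> wc; have w1 := edge_root wc; case/andP: wc => _ /orP[]/eqP->.
  by exists true, b => a; rewrite sem_upd_high.
by exists false, (b (+) flip w) => a; rewrite sem_upd_low.
Qed.

Lemma connect_essential w c b : connect edge w c -> c != one ->
  ~ indep_of (sem w b) (var c).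
Proof.
case/connectP=> p; elim: p w b => [|c' p IHp] w b /=.
  by move=> _ -> c1; apply: root_essential c1 _ => ? ? ? ? _; apply: sem_inj.
case/andP=> wc' c'p c_eq c1 indep; have [v [b' eq_c']] := edge_sem b wc'.
have [c'1 le_c'c] : c' != one /\ rk (var c') <= rk (var c).
  by apply: connect_rank c1; apply/connectP; exists p.
have neq_wc : var w != var c.
  by apply: contraTneq (leq_trans (edge_rank wc' c'1) le_c'c) => <-; rewrite ltnn.
apply: (IHp c' b' c'p c_eq c1) => a v'.
rewrite !eq_c' -(indep [eta a with var w |-> v] v').
by apply: sem_ext => z /=; case: eqP => [->|//]; rewrite (negbTE neq_wc).
Qed.

End Semantics.

Section Execution.
Variables (n r : nat) (rho : cobdd n r).

Lemma run_K_time_bound (p : kbits_prog rho) x fuel T :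
  (forall a, a < r -> exists rt, run_kbits p x fuel a = Some rt /\ rt.2 <= T) ->
  exists t, run_K_time p x fuel = Some t /\ t <= 3 + r * (T + 3).
Proof.
move=> time_a; rewrite /run_K_time -[X in 3 + X * _](size_iota 0 r).
have : all (gtn r) (iota 0 r) by apply/allP => a; rewrite mem_iota.
elim: (iota 0 r) => [|a s IHs] /=; first by exists 3.
case/andP=> lt_ar /IHs[t [-> le_t]]; have [rt [-> le_rt]] := time_a a lt_ar.
by exists (t + 3 + rt.2); split=> //; nia.
Qed.

End Execution.

Section Synthesis.
Variables (n r : nat) (rho : cobdd n r).
Variables (v : node rho) (b : bool) (vs : 'I_r -> node rho) (bs : 'I_r -> bool).
Hypothesis synth : synth_spec v b vs bs.
Local Notation one := (Defs.one rho).
Local Notation edge := (@edge _ _ rho).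
Local Notation xdepth := (rank_count (@inl 'I_n 'I_r)).

Lemma synth_sem_xonly i (a a' : cvar n r -> bool) :
  (forall j, a (inl j) = a' (inl j)) -> sem (vs i) (bs i) a = sem (vs i) (bs i) a'.
Proof.
have [m] := ubnP i; elim: m i a a' => // m IHm i a a' lt_im eq_x.
rewrite !synth; apply: eq_existsb => u; apply: sem_ext => -[j|k] //=.
by case: ifP => // lt_ki; apply: IHm (leq_trans lt_ki (ltnSE lt_im)) eq_x.
Qed.

Lemma reachable_xvar i w : connect edge (vs i) w -> w != one ->
  exists j, var w = inl j.
Proof.
move=> reach w1; case var_w: (var w) => [j|k]; first by exists j.
case: (connect_essential (b := bs i) reach w1); rewrite var_w => a u.
exact: synth_sem_xonly.
Qed.

Lemma run_blocks_time i x k w ret : connect edge (vs i) w -> xdepth w < k ->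
  exists res t, run_blocks (synth_prog vs bs) x k w ret = Some (res, t) /\
    t <= 3 * xdepth w + 1.
Proof.
elim: k w ret => // k IHk w ret reach lt_wk.
have reach_some : [exists i0, connect edge (vs i0) w] by apply/existsP; exists i.
rewrite /= reach_some /translate.
case: ifPn => [_|w1]; first by exists ret, 1; rewrite leq_addl.
have [j var_w] := reachable_xvar reach w1; rewrite var_w.
have step c ret' d : edge w c -> d <= 3 -> exists res t,
    omap (fun rt => (rt.1, rt.2 + d)) (run_blocks (synth_prog vs bs) x k c ret')
      = Some (res, t) /\ t <= 3 * xdepth w + 1.
  move=> wc le_d3; have lt_cw := rank_count_edge wc var_w.
  have [res [t [-> le_t]]] :=
    IHk c ret' (connect_trans reach (connect1 wc)) (leq_trans lt_cw lt_wk).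
  by exists res, (t + d); split=> //; lia.
by case: ifP => _; [|case: (flip w)]; apply: step => //;
  [apply: edge_high | apply: edge_low | apply: edge_low].
Qed.

Lemma run_kbits_time x a : a < r ->
  exists rt, run_kbits (synth_prog vs bs) x n.+1 a = Some rt /\ rt.2 <= 3 * n + 5.
Proof.
move=> lt_ar; pose i : 'I_r := Sub a lt_ar.
have case_a : kb_case (synth_prog vs bs) a = Some (~~ bs i, vs i).
  by rewrite /= (insubT (fun k => k < r) lt_ar).
have xdepth_n := rank_count_max (@inl 'I_n 'I_r) (vs i); rewrite card_ord in xdepth_n.
have [res [t [run_t le_t]]] := run_blocks_time x (~~ bs i) (connect0 _ (vs i))
  (xdepth_n : _ < n.+1).
by rewrite /run_kbits case_a run_t; exists (res, t + 4); split=> //=; lia.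
Qed.

End Synthesis.

Theorem corollary1 :
  exists c : nat,
  forall (n r : nat) (rho : cobdd n r) (v : node rho) (b : bool)
         (vs : 'I_r -> node rho) (bs : 'I_r -> bool),
    synth_spec v b vs bs ->
    forall x : nat -> int,
    exists fuel t,
      run_K_time (synth_prog vs bs) x fuel = Some t /\
      t <= c * (r.+1 * n.+1).
Proof.
exists 8 => n r rho v b vs bs synth x.
have [t [run_t le_t]] := run_K_time_bound (run_kbits_time synth x).
by exists n.+1, t; split=> //; nia.
Qed.
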